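(* Let $(G,r)$ be a symmetric group with $|G|\ge2$, $(G,+,\cdot)$ its associated left brace, and $\{1\}=K_0\subseteq K_1\subseteq\cdots$ its derived chain of ideals. (1) For all integers $j,s$ with $1\le s\le j$: $((\cdots((K_j*G)*G)*\cdots)*G)\subseteq K_{j-s}$, where $*G$ is applied $s$ times. (2) For an integer $m\ge1$ the following are equivalent: (a) $(G,r)$ has finite multipermutation level $\mathrm{mpl}(G,r)=m$; (b) the derived chain has the form $\{1\}=K_0\subsetneq K_1\subsetneq\cdots\subsetneq K_{m-1}\subsetneq K_m=G$; (c) $G^{(j+1)}\subseteq K_{m-j}$ for $0\le j\le m$, and $G^{(j+1)}\not\subseteq K_{m-j-1}$ for $0\le j\le m-1$; (d) $G^{(m+1)}=0$ and $G^{(m)}\neq0$ (i.e. the brace is right nilpotent of class $m+1$).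
   Context: A symmetric group is a pair $(G,r)$, $G$ a group, $r(u,v)=({}^uv,u^v)$ an involutive bijection of $G\times G$ with ${}^a1=1,{}^1u=u,1^u=1,a^1=a$, ${}^{ab}u={}^a({}^bu)$, $a^{uv}=(a^u)^v$, ${}^a(uv)=({}^au)({}^{a^u}v)$, $(ab)^u=(a^{{}^bu})(b^u)$, $uv=({}^uv)(u^v)$; it is a non-degenerate symmetric set. Its associated left brace is $(G,+,\cdot)$ with $a+b:=a({}^{a^{-1}}b)$; then ${}^ab=ab-a$ and $0=1$. Define $a*b:=ab-a-b$; for subsets $A,B$, $A*B$ is the additive subgroup generated by $\{a*b:a\in A,b\in B\}$; $G^{(1)}=G$, $G^{(s+1)}=G^{(s)}*G$. An ideal is a normal subgroup $H$ with ${}^aH\subseteq H$ for all $a$; $G/H$ then inherits a symmetric group structure. The socle is $\mathrm{soc}(G)=\{a:{}^au=u\ \forall u\in G\}$, an ideal with $G/\mathrm{soc}(G)\cong\mathrm{Ret}(G,r)$. Put $G^0=G$, $G^j=G^{j-1}/\mathrm{soc}(G^{j-1})$ with canonical maps $\varphi_j:G^{j-1}\to G^j$, $K_0=\{1\}$, $K_1=\mathrm{soc}(G)$, $K_j=(\varphi_{j-1}\circ\cdots\circ\varphi_1)^{-1}(\mathrm{soc}(G^{j-1}))$ for $j>1$ (the derived chain of ideals). The retraction of a non-degenerate symmetric set $(X,r)$ is $X/\!\sim$ ($x\sim y$ iff ${}^xz={}^yz$ for all $z$) with the induced map; $\mathrm{mpl}(X,r)=m$ means $m$ is minimal such that the $m$-fold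 iterated retraction is a one-element set. *)

From Stdlib Require Import Arith.

(* A symmetric group (G,r), r(u,v) = (lact u v, ract u v) = (^u v, u^v). *)
Record SymGroup := {
  car :> Type;
  mul : car -> car -> car;
  one : car;
  inv : car -> car;
  lact : car -> car -> car;
  ract : car -> car -> car;
  mulA : forall a b c, mul a (mul b c) = mul (mul a b) c;
  mul1g : forall a, mul one a = a;
  mulg1 : forall a, mul a one = a;
  mulVg : forall a, mul (inv a) a = one;
  mulgV : forall a, mul a (inv a) = one;
  r_invol1 : forall u v, lact (lact u v) (ract u v) = u;
  r_invol2 : forall u v, ract (lact u v) (ract u v) = v;
  lact_a1 : forall a, lact a one = one;
  lact_1u : forall u, lact one u = u;
  ract_1u : forall u, ract one u = one;
  ract_a1 : forall a, ract a one = a;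
  lact_mul : forall a b u, lact (mul a b) u = lact a (lact b u);
  ract_mul : forall a u v, ract a (mul u v) = ract (ract a u) v;
  lact_dist : forall a u v, lact a (mul u v) = mul (lact a u) (lact (ract a u) v);
  ract_dist : forall a b u, ract (mul a b) u = mul (ract a (lact b u)) (ract b u);
  mul_r : forall u v, mul u v = mul (lact u v) (ract u v)
}.

Section Brace.
Variable G : SymGroup.

Definition subset (A B : G -> Prop) : Prop := forall x, A x -> B x.
Definition fullset : G -> Prop := fun _ => True.

(* associated left brace: a + b := a (^{a^-1} b); zero is 1 *)
Definition badd (a b : G) : G := mul G a (lact G (inv G a) b).
(* additive inverse: the unique b with a + b = 1 *)
Definition bopp (a : G) : G := lact G a (inv G a).
Definition bsub (a b : G) : G := badd a (bopp b).

Definition bstar (a b : G) : G := bsub (bsub (mul G a b) a) b.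

Inductive addgen (P : G -> Prop) : G -> Prop :=
  | addgen_in : forall x, P x -> addgen P x
  | addgen_0 : addgen P (one G)
  | addgen_add : forall x y, addgen P x -> addgen P y -> addgen P (badd x y)
  | addgen_opp : forall x, addgen P x -> addgen P (bopp x).

Definition setstar (A B : G -> Prop) : G -> Prop :=
  addgen (fun x => exists a b, A a /\ B b /\ x = bstar a b).

(* G^(s): G^(1) = G, G^(s+1) = G^(s) * G  (G^(0) set to G by convention, unused) *)
Fixpoint Gder (s : nat) : G -> Prop :=
  match s with
  | 0 => fullset
  | 1 => fullset
  | S s' => setstar (Gder s') fullset
  end.

(* G^j = G/K_j is represented by the congruence
   Eq_j (x ~ y iff x^{-1} y in K_j); K_{j+1} is the preimage of soc(G^j):
   the classes a acting trivially on G^j, i.e. ^a u ~_j u for all u. *)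
Fixpoint Kchain (j : nat) : G -> Prop :=
  match j with
  | 0 => fun x => x = one G
  | S j' => fun a => forall u, Kchain j' (mul G (inv G (lact G a u)) u)
  end.

(* Iterated retraction of the symmetric set (G,r): Ret^k(G) = G / RetEq k,
   with RetEq 0 = equality and [x] ~ [y] in Ret^{k+1} iff ^x z and ^y z are
   identified in Ret^k for every z. *)
Fixpoint RetEq (k : nat) : G -> G -> Prop :=
  match k with
  | 0 => fun x y => x = y
  | S k' => fun x y => forall z, RetEq k' (lact G x z) (lact G y z)
  end.

Definition RetTrivial (k : nat) : Prop := forall x y : G, RetEq k x y.

Definition mpl_eq (m : nat) : Prop :=
  RetTrivial m /\ (forall k, k < m -> ~ RetTrivial k).

End Brace.

From Stdlib Require Import Arith Classical Lia.

(** Let [x ~_j y] mean [x^-1 y ∈ K_j].  Unwinding the definition,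
    [a ∈ K_(j+1)] iff [^a u ~_j u] for all [u]; once every [K_j] is known to
    be an ideal, [x ~_j y] is equivalent to [x - y ∈ K_j], so [a ∈ K_(j+1)]
    iff [a * u = ^a u - u ∈ K_j] for all [u].  Hence [K_(j+1) * G ⊆ K_j],
    which iterates to (1), and conversely [G^(j+1) ⊆ K_l] iff [K_(l+j) = G].
    The [k]-th iterated retraction identifies [x] and [y] exactly when
    [x ~_k y], so [mpl(G,r) = m] iff [K_m = G ≠ K_(m-1)], and (b)–(d) are
    reformulations of this; the chain is strict below [m] because [K_(i+1)]
    is determined by [K_i], so it cannot stall before reaching [G]. *)

Section SymmetricGroup.
Variable G : SymGroup.

Local Notation "x ⋅ y" := (mul G x y) (at level 40, left associativity).
Local Notation "x ⊕ y" := (badd G x y) (at level 50, left associativity).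
Local Notation "x ⊖ y" := (bsub G x y) (at level 50, left associativity).
Local Notation Kfull k := (forall x, Kchain G k x).

Lemma mulKg (a b : G) : inv G a ⋅ (a ⋅ b) = b.
Proof. rewrite mulA, mulVg, mul1g; reflexivity. Qed.

Lemma mulKVg (a b : G) : a ⋅ (inv G a ⋅ b) = b.
Proof. rewrite mulA, mulgV, mul1g; reflexivity. Qed.

Lemma mulgK (a b : G) : b ⋅ a ⋅ inv G a = b.
Proof. rewrite <- mulA, mulgV, mulg1; reflexivity. Qed.

Lemma mulgKV (a b : G) : b ⋅ inv G a ⋅ a = b.
Proof. rewrite <- mulA, mulVg, mulg1; reflexivity. Qed.

Lemma invg_unique (a b : G) : a ⋅ b = one G -> inv G a = b.
Proof. intro h. rewrite <- (mulKg a b), h, mulg1. reflexivity. Qed.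

Lemma invgK (a : G) : inv G (inv G a) = a.
Proof. apply invg_unique, mulVg. Qed.

Lemma invMg (a b : G) : inv G (a ⋅ b) = inv G b ⋅ inv G a.
Proof. apply invg_unique. rewrite mulA, mulgK, mulgV. reflexivity. Qed.

Lemma invg1 : inv G (one G) = one G.
Proof. apply invg_unique, mul1g. Qed.

Lemma lactK (a u : G) : lact G (inv G a) (lact G a u) = u.
Proof. rewrite <- lact_mul, mulVg, lact_1u. reflexivity. Qed.

Lemma lactKV (a u : G) : lact G a (lact G (inv G a) u) = u.
Proof. rewrite <- lact_mul, mulgV, lact_1u. reflexivity. Qed.

Lemma ract_lact (a x : G) : ract G a x = inv G (lact G a x) ⋅ (a ⋅ x).
Proof. rewrite (mul_r G a x), mulKg. reflexivity. Qed.

Lemma ract_lactV (x y : G) : ract G x y = lact G (inv G (lact G x y)) x.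
Proof. rewrite <- (lactK (lact G x y) (ract G x y)), r_invol1. reflexivity. Qed.

Lemma badd_lact (a b : G) : a ⊕ lact G a b = a ⋅ b.
Proof. unfold badd. rewrite lactK. reflexivity. Qed.

Lemma baddC (x y : G) : x ⊕ y = y ⊕ x.
Proof.
  unfold badd. set (z := lact G (inv G x) y).
  assert (hz : lact G x z = y) by apply lactKV.
  rewrite (mul_r G x z), ract_lactV, hz. reflexivity.
Qed.

Lemma lact_badd (g x y : G) : lact G g (x ⊕ y) = lact G g x ⊕ lact G g y.
Proof.
  unfold badd. rewrite lact_dist, <- !lact_mul. f_equal. f_equal.
  rewrite ract_lact, mulA, mulgK. reflexivity.
Qed.

Lemma baddA (a b c : G) : a ⊕ (b ⊕ c) = a ⊕ b ⊕ c.
Proof.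
  unfold badd at 1. rewrite lact_badd. unfold badd.
  rewrite invMg, lact_mul, mulA. reflexivity.
Qed.

Lemma badd0l (a : G) : one G ⊕ a = a.
Proof. unfold badd. rewrite invg1, lact_1u, mul1g. reflexivity. Qed.

Lemma badd0r (a : G) : a ⊕ one G = a.
Proof. unfold badd. rewrite lact_a1, mulg1. reflexivity. Qed.

Lemma baddN (a : G) : a ⊕ bopp G a = one G.
Proof. unfold badd, bopp. rewrite lactK, mulgV. reflexivity. Qed.

Lemma baddCA (x y z : G) : x ⊕ (y ⊕ z) = y ⊕ (x ⊕ z).
Proof. rewrite !baddA, (baddC x y). reflexivity. Qed.

Lemma bsubKC (x y : G) : y ⊕ (x ⊖ y) = x.
Proof. unfold bsub. rewrite (baddC x), baddA, baddN, badd0l. reflexivity. Qed.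

Lemma bsub_eq (x p g c : G) : x ⊕ p = g ⊕ c -> x ⊖ c = g ⊖ p.
Proof.
  intro h. unfold bsub.
  rewrite <- (badd0r x), <- (baddN p), baddA, h.
  rewrite <- !baddA, (baddCA c), baddN, badd0r. reflexivity.
Qed.

Lemma bstar_lact (a b : G) : bstar G a b = lact G a b ⊖ b.
Proof.
  unfold bstar. f_equal. unfold bsub.
  rewrite <- badd_lact, (baddC a), <- baddA, baddN, badd0r. reflexivity.
Qed.

Lemma not_subset_ex (A B : G -> Prop) :
  ~ subset G A B <-> exists x, A x /\ ~ B x.
Proof.
  split.
  - intro h. apply NNPP. intro hn. apply h. intros x hx.
    apply NNPP. intro hx'. apply hn. exists x. auto.
  - intros [x [hA hB]] h. exact (hB (h x hA)).
Qed.

(** [cong K x y] is the congruence [x K = y K]; [soc_mod K] is the preimage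
    of the socle of [G/K], so that [Kchain (S j)] is [soc_mod (Kchain j)]. *)
Definition cong (K : G -> Prop) (x y : G) : Prop := K (inv G x ⋅ y).

Definition soc_mod (K : G -> Prop) (a : G) : Prop :=
  forall u, cong K (lact G a u) u.

Record ideal (K : G -> Prop) : Prop := {
  ideal1 : K (one G);
  idealM : forall x y, K x -> K y -> K (x ⋅ y);
  idealV : forall x, K x -> K (inv G x);
  idealJ : forall g x, K x -> K (g ⋅ x ⋅ inv G g);
  ideal_lact : forall g x, K x -> K (lact G g x) }.

Section Ideal.
Variable K : G -> Prop.
Hypothesis idealK : ideal K.

Lemma cong_sym (x y : G) : cong K x y -> cong K y x.
Proof.
  unfold cong. intro h. apply (idealV _ idealK) in h. rewrite invMg, invgK in h. exact h.
Qed.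

Lemma cong_trans (x y z : G) : cong K x y -> cong K y z -> cong K x z.
Proof.
  unfold cong. intros hxy hyz.
  rewrite <- (mulKVg y z), mulA. apply (idealM _ idealK); assumption.
Qed.

Lemma cong_lact (g x y : G) : cong K x y -> cong K (lact G g x) (lact G g y).
Proof.
  unfold cong. intro h. rewrite <- (mulKVg x y), lact_dist, mulKg.
  apply (ideal_lact _ idealK), h.
Qed.

Lemma bsub_cong (x y : G) : K (x ⊖ y) <-> cong K y x.
Proof.
  assert (hy : lact G (inv G y) (x ⊖ y) = inv G y ⋅ x).
  { rewrite <- (bsubKC x y) at 2. unfold badd at 1. rewrite mulKg. reflexivity. }
  unfold cong. rewrite <- hy. split; intro h.
  - apply (ideal_lact _ idealK), h.
  - apply (ideal_lact _ idealK) with (g := y) in h. rewrite lactKV in h. exact h.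
Qed.

Lemma addgen_sub (P : G -> Prop) : subset G P K -> subset G (addgen G P) K.
Proof.
  intros hP x hx. induction hx.
  - apply hP; assumption.
  - apply (ideal1 _ idealK).
  - unfold badd. apply (idealM _ idealK); [|apply (ideal_lact _ idealK)]; assumption.
  - unfold bopp. apply (ideal_lact _ idealK), (idealV _ idealK); assumption.
Qed.

Lemma soc_modM (a b : G) : soc_mod K a -> soc_mod K b -> soc_mod K (a ⋅ b).
Proof.
  intros ha hb u. rewrite lact_mul. apply (cong_trans _ (lact G b u)); auto.
Qed.

Lemma soc_modJ (g a : G) : soc_mod K a -> soc_mod K (g ⋅ a ⋅ inv G g).
Proof.
  intros ha u. rewrite !lact_mul.
  rewrite <- (lactKV g u) at 2. apply cong_lact, ha.
Qed.

Hypothesis K_sub_soc : subset G K (soc_mod K).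

(** For [x = g a g^-1] we have [x + ^x g = xg = ga = g + ^g a], hence
    [x - ^g a = g - ^x g ∈ K]; so [^g a ∈ x K ⊆ soc_mod K]. *)
Lemma soc_mod_lact (g a : G) : soc_mod K a -> soc_mod K (lact G g a).
Proof.
  intro ha.
  set (x := g ⋅ a ⋅ inv G g). assert (hx : soc_mod K x) by (apply soc_modJ, ha).
  assert (hsum : x ⊕ lact G x g = g ⊕ lact G g a).
  { rewrite !badd_lact. unfold x. apply mulgKV. }
  assert (hg : K (g ⊖ lact G x g)) by (apply bsub_cong, hx).
  rewrite <- (bsub_eq _ _ _ _ hsum) in hg.
  apply bsub_cong, cong_sym in hg.
  rewrite <- (mulKVg x (lact G g a)). apply soc_modM; [exact hx | apply K_sub_soc, hg].
Qed.

Lemma ideal_soc_mod : ideal (soc_mod K).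
Proof.
  split.
  - intro u. unfold cong. rewrite lact_1u, mulVg. apply (ideal1 _ idealK).
  - exact soc_modM.
  - intros a ha u. apply cong_sym.
    specialize (ha (lact G (inv G a) u)). rewrite lactKV in ha. exact ha.
  - exact soc_modJ.
  - exact soc_mod_lact.
Qed.

End Ideal.

Lemma soc_mod_mono (K K' : G -> Prop) :
  subset G K K' -> subset G (soc_mod K) (soc_mod K').
Proof. intros h a ha u. apply h, ha. Qed.

Lemma Kchain_sub_succ (j : nat) : subset G (Kchain G j) (Kchain G (S j)).
Proof.
  induction j as [|j IH]; intros x hx.
  - simpl in hx. subst x. intro u. simpl. rewrite lact_1u, mulVg. reflexivity.
  - exact (soc_mod_mono _ _ IH x hx).
Qed.

Lemma ideal_Kchain (j : nat) : ideal (Kchain G j).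
Proof.
  induction j as [|j IH].
  - split; simpl; intros; subst.
    + reflexivity.
    + apply mul1g.
    + apply invg1.
    + rewrite mulg1, mulgV. reflexivity.
    + apply lact_a1.
  - exact (ideal_soc_mod _ IH (Kchain_sub_succ j)).
Qed.

Lemma Kchain_mono (i k : nat) : i <= k -> subset G (Kchain G i) (Kchain G k).
Proof.
  induction 1 as [|k _ IH]; intros x hx; [exact hx|].
  apply Kchain_sub_succ, IH, hx.
Qed.

Lemma Kchain_succ_bstar (j : nat) (a : G) :
  Kchain G (S j) a <-> forall b, Kchain G j (bstar G a b).
Proof.
  split; intros h b; specialize (h b); rewrite bstar_lact in *.
  - apply (bsub_cong _ (ideal_Kchain j)), (cong_sym _ (ideal_Kchain j)), h.
  - apply (cong_sym _ (ideal_Kchain j)), (bsub_cong _ (ideal_Kchain j)), h.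
Qed.

Lemma setstar_sub_Kchain (j : nat) (A B : G -> Prop) :
  subset G A (Kchain G (S j)) -> subset G (setstar G A B) (Kchain G j).
Proof.
  intro hA. apply (addgen_sub _ (ideal_Kchain j)).
  intros x [a [b [ha [_ ->]]]]. apply Kchain_succ_bstar, hA, ha.
Qed.

Definition rstar (A : G -> Prop) : G -> Prop := setstar G A (fullset G).

Lemma iter_rstar_Kchain (j s : nat) :
  s <= j -> subset G (Nat.iter s rstar (Kchain G j)) (Kchain G (j - s)).
Proof.
  induction s as [|s IH]; intro hs.
  - rewrite Nat.sub_0_r. intros x hx. exact hx.
  - apply setstar_sub_Kchain. replace (S (j - S s)) with (j - s) by lia.
    apply IH. lia.
Qed.

Lemma Gder_sub_Kchain (j l : nat) :
  subset G (Gder G (S j)) (Kchain G l) <-> Kfull (l + j).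
Proof.
  revert l. induction j as [|j IH]; intro l.
  - rewrite Nat.add_0_r. split; intros h x; [exact (h x I) | intros _; apply h].
  - rewrite Nat.add_succ_r, <- Nat.add_succ_l, <- IH. split; intro h.
    + intros y hy. apply Kchain_succ_bstar. intro b. apply h, addgen_in.
      exists y, b. repeat split; auto.
    + exact (setstar_sub_Kchain l _ _ h).
Qed.

Lemma RetEq_cong (k : nat) (x y : G) : RetEq G k x y <-> cong (Kchain G k) x y.
Proof.
  revert x y. induction k as [|k IH]; intros x y; simpl.
  - unfold cong. simpl. split; intro h.
    + subst. apply mulVg.
    + rewrite <- (mulKVg x y), h, mulg1. reflexivity.
  - split; intro h.
    + intro u. specialize (h u). apply IH, (cong_lact _ (ideal_Kchain k)) with (g := inv G x) in h.
      rewrite lactK, <- lact_mul in h. apply (cong_sym _ (ideal_Kchain k)), h.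
    + intro z. apply IH. specialize (h z).
      apply (cong_lact _ (ideal_Kchain k)) with (g := x) in h.
      rewrite <- lact_mul, mulKVg in h. apply (cong_sym _ (ideal_Kchain k)), h.
Qed.

Lemma RetTrivialE (k : nat) : RetTrivial G k <-> Kfull k.
Proof.
  unfold RetTrivial. split; intros h x.
  - pose proof (proj1 (RetEq_cong k _ _) (h (one G) x)) as hx.
    unfold cong in hx. rewrite invg1, mul1g in hx. exact hx.
  - intro y. apply RetEq_cong, h.
Qed.

Lemma Kchain_stable (i n : nat) :
  subset G (Kchain G (S i)) (Kchain G i) -> subset G (Kchain G (n + i)) (Kchain G i).
Proof.
  intro h.
  assert (step : forall k, subset G (Kchain G (S (k + i))) (Kchain G (k + i))).
  { induction k as [|k IH]; [exact h | exact (soc_mod_mono _ _ IH)]. }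
  induction n as [|n IH]; intros x hx; [exact hx | apply IH, step, hx].
Qed.

Lemma mpl_eqE (m : nat) : 1 <= m -> mpl_eq G m <-> Kfull m /\ ~ Kfull (m - 1).
Proof.
  intro hm. unfold mpl_eq. split.
  - intros [hfull hk]. split; [apply RetTrivialE, hfull|].
    intro h. apply (hk (m - 1)); [lia | apply RetTrivialE, h].
  - intros [hfull hnot]. split; [apply RetTrivialE, hfull|].
    intros k hk hk'. apply hnot. intro x.
    apply (Kchain_mono k); [lia | apply RetTrivialE, hk'].
Qed.

Lemma Kchain_strictE (m : nat) : 1 <= m ->
  ((forall i, i < m ->
      subset G (Kchain G i) (Kchain G (S i)) /\
      exists x, Kchain G (S i) x /\ ~ Kchain G i x)
   /\ Kfull m) <-> Kfull m /\ ~ Kfull (m - 1).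
Proof.
  intro hm. split.
  - intros [hchain hfull]. split; [exact hfull|]. intro h.
    destruct (hchain (m - 1)) as [_ [x [_ hx]]]; [lia | exact (hx (h x))].
  - intros [hfull hnot]. split; [|exact hfull]. intros i hi.
    split; [apply Kchain_sub_succ|].
    apply not_subset_ex. intro hsub. apply hnot. intro x.
    apply (Kchain_mono i); [lia|]. apply (Kchain_stable i (m - i) hsub).
    replace (m - i + i) with m by lia. apply hfull.
Qed.

Lemma Gder_KchainE (m : nat) : 1 <= m ->
  ((forall j, j <= m -> subset G (Gder G (S j)) (Kchain G (m - j)))
   /\ (forall j, j <= m - 1 -> ~ subset G (Gder G (S j)) (Kchain G (m - j - 1))))
  <-> Kfull m /\ ~ Kfull (m - 1).
Proof.
  intro hm. split.
  - intros [hsub hnot]. split.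
    + pose proof (proj1 (Gder_sub_Kchain 0 (m - 0)) (hsub 0 (Nat.le_0_l m))) as h.
      rewrite Nat.sub_0_r, Nat.add_0_r in h. exact h.
    + intro h. apply (hnot 0); [lia|]. apply Gder_sub_Kchain.
      replace (m - 0 - 1 + 0) with (m - 1) by lia. exact h.
  - intros [hfull hnot]. split; intros j hj; rewrite Gder_sub_Kchain.
    + replace (m - j + j) with m by lia. exact hfull.
    + replace (m - j - 1 + j) with (m - 1) by lia. exact hnot.
Qed.

Lemma Gder_nilE (m : nat) : 1 <= m ->
  ((forall x, Gder G (S m) x -> x = one G) /\ (exists x, Gder G m x /\ x <> one G))
  <-> Kfull m /\ ~ Kfull (m - 1).
Proof.
  intro hm. destruct m as [|m]; [lia|]. replace (S m - 1) with m by lia.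
  rewrite <- (Gder_sub_Kchain (S m) 0), <- (Gder_sub_Kchain m 0), not_subset_ex.
  reflexivity.
Qed.

End SymmetricGroup.

Theorem mainTheorem6 (G : SymGroup) (H2 : exists x y : G, x <> y) :
  (forall j s : nat, 1 <= s -> s <= j ->
     subset G (Nat.iter s (fun A => setstar G A (fullset G)) (Kchain G j))
              (Kchain G (j - s)))
  /\
  (forall m : nat, 1 <= m ->
     let a := mpl_eq G m in
     let b := (forall i, i < m ->
                 subset G (Kchain G i) (Kchain G (S i)) /\
                 exists x, Kchain G (S i) x /\ ~ Kchain G i x)
              /\ (forall x, Kchain G m x) in
     let c := (forall j, j <= m -> subset G (Gder G (S j)) (Kchain G (m - j)))
              /\ (forall j, j <= m - 1 ->
                    ~ subset G (Gder G (S j)) (Kchain G (m - j - 1))) in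
     let d := (forall x, Gder G (S m) x -> x = one G)
              /\ (exists x, Gder G m x /\ x <> one G) in
     (a <-> b) /\ (a <-> c) /\ (a <-> d)).
Proof.
  split.
  - intros j s _ hs. exact (iter_rstar_Kchain G j s hs).
  - intros m hm. cbv zeta.
    rewrite (mpl_eqE G m hm), (Kchain_strictE G m hm), (Gder_KchainE G m hm),
      (Gder_nilE G m hm).
    tauto.
Qed.
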